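(* Let $n$ be a positive integer, $1\le k\le n$, and $w\in\mathfrak S_n$. For any $X\in\binom{[n]}{k+1}$, the intersection $P(X)\cap\mathrm{Inv}_k(w)$ is one of the following: $\emptyset$; $\{X_i\}$ for some $i\in[k+1]$; $\{X_i,X_{i+1}\}$ for some $i\in[k]$; or the entire packet $P(X)$.
   Context: $\mathfrak S_n$ is the symmetric group on $[n]=\{1,\dots,n\}$. $\binom{[n]}{m}$ is the set of $m$-element subsets of $[n]$, each written $[x_1,\dots,x_m]$ with $x_1<\dots<x_m$. For $X=[x_1,\dots,x_m]$ and $i\in[m]$, $X_i$ is $X$ with $x_i$ removed, and $P(X)=\{X_1,\dots,X_m\}$. $\mathrm{Inv}_m(w)=\{[x_1,\dots,x_m]\in\binom{[n]}{m}: w^{-1}(x_1)>\dots>w^{-1}(x_m)\}$. *)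

From mathcomp Require Import all_boot all_order all_fingroup.
Set Implicit Arguments. Unset Strict Implicit. Unset Printing Implicit Defensive.

(* [n] = {1,...,n} is represented by 'I_n = {0,...,n-1} (shift by one;
   the order is preserved, which is all that matters). *)

Definition selems (n : nat) (X : {set 'I_n}) : seq 'I_n :=
  sort (fun a b : 'I_n => (a <= b)%N) (enum X).

(* X_i with 0-based index i: X with its (i+1)-th smallest element removed. *)
Definition Xdel (n : nat) (X : {set 'I_n}) (i : nat) : {set 'I_n} :=
  [set x in X | index x (selems X) != i].

Definition packet (n : nat) (X : {set 'I_n}) : {set {set 'I_n}} :=
  [set Xdel X i | i : 'I_#|X|].

Definition Inv (n m : nat) (w : 'S_n) : {set {set 'I_n}} :=
  [set Y : {set 'I_n} | (#|Y| == m) &&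
     sorted (fun a b : 'I_n => ((w^-1)%g b < (w^-1)%g a)%N) (selems Y)].

(* Write s for the increasing enumeration of X, so that X_i corresponds to s
   with its i-th entry deleted, and X_i lies in Inv_k(w) exactly when that
   shortened sequence is decreasing for w^-1.  If deleting i and deleting j
   with j >= i + 2 both leave decreasing sequences, every adjacent pair of s
   survives one of the two deletions, so s itself is decreasing and then all
   of P(X) lies in Inv_k(w).  Otherwise the admissible indices are pairwise at
   distance at most one: there are none, one, or two consecutive ones. *)

From mathcomp Require Import all_boot all_order all_fingroup.
From mathcomp Require Import zify.
Set Implicit Arguments. Unset Strict Implicit. Unset Printing Implicit Defensive.

Definition del_at (T : Type) (i : nat) (s : seq T) := take i s ++ drop i.+1 s.

Section DeleteAt.
Variable T : Type.
Implicit Types s : seq T.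

Lemma size_del_at s i : i < size s -> size (del_at i s) = (size s).-1.
Proof. by move=> lt_i; rewrite size_cat size_take lt_i size_drop; lia. Qed.

Lemma nth_del_at (x0 : T) s i m : i < size s ->
  nth x0 (del_at i s) m = nth x0 s (if m < i then m else m.+1).
Proof.
move=> lt_i; rewrite nth_cat size_take lt_i; case: ltnP => [lt_mi | le_im].
  by rewrite nth_take.
by rewrite nth_drop addSn subnKC.
Qed.

(* Every adjacent pair (m, m.+1) of s avoids i or avoids j. *)
Lemma sorted_of_sorted_del_at2 (x0 : T) (r : rel T) s i j :
  i.+1 < j -> j < size s ->
  sorted r (del_at i s) -> sorted r (del_at j s) -> sorted r s.
Proof.
move=> lt_ij lt_j /(sortedP x0) sorted_i /(sortedP x0) sorted_j.
apply/(sortedP x0) => m lt_m; have lt_i : i < size s by lia.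
have [lt_mi | le_im] := ltnP m.+1 i.
  have := sorted_i m; rewrite size_del_at // !nth_del_at //.
  by rewrite !ifT; [apply; lia | lia | lia].
have [lt_im | le_mi] := ltnP i m.
  have := sorted_i m.-1; rewrite size_del_at // !nth_del_at // prednK; last by lia.
  by rewrite !ifF; [apply; lia | lia | lia].
have := sorted_j m; rewrite size_del_at // !nth_del_at //.
by rewrite !ifT; [apply; lia | lia | lia].
Qed.

End DeleteAt.

Lemma del_at_subseq (T : eqType) (s : seq T) i : subseq (del_at i s) s.
Proof.
rewrite -{2}(cat_take_drop i s) /del_at cat_subseq // -add1n -drop_drop.
exact: drop_subseq.
Qed.

Lemma sorted_del_at (T : eqType) (r : rel T) (s : seq T) i :
  transitive r -> sorted r s -> sorted r (del_at i s).
Proof. by move=> r_tr; apply/subseq_sorted/del_at_subseq. Qed.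

Lemma filter_index_neq (T : eqType) (s : seq T) i :
  uniq s -> [seq x <- s | index x s != i] = del_at i s.
Proof.
rewrite /del_at; elim: s i => [|x s IH] i //= /andP[x_notin_s uniq_s].
have x_neq y : y \in s -> (x == y) = false.
  by apply: contraTF => /eqP <-.
rewrite eqxx; case: i => [|i] /=.
  by rewrite drop0; apply/all_filterP/allP => y /x_neq ->.
by rewrite -IH //; congr cons; apply: eq_in_filter => y /x_neq ->.
Qed.

Lemma sorted_ltn_close (t : seq nat) :
  sorted ltn t -> {in t &, forall i j, j <= i.+1} ->
  [\/ t = [::], exists a, t = [:: a] | exists a, t = [:: a; a.+1]].
Proof.
case: t => [|a [|b [|c t]]] sorted_t close; first by constructor 1.
- by constructor 2; exists a.
- constructor 3; exists a; have := close a b; move: sorted_t => /=.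
  by rewrite !inE !eqxx orbT andbT => lt_ab /(_ isT isT) le_ba; congr [:: _; _]; lia.
- move: sorted_t => /= /and3P[lt_ab lt_bc _].
  by have := close a c; rewrite !inE !eqxx !orbT => /(_ isT isT); lia.
Qed.

Definition inv_gt (n : nat) (w : 'S_n) : rel 'I_n :=
  fun a b => ((w^-1)%g b < (w^-1)%g a)%N.

Section Packets.
Variables (n : nat) (w : 'S_n).
Implicit Types X Y : {set 'I_n}.

Let ord_le := fun a b : 'I_n => (a <= b)%N.

Lemma selems_sorted X : sorted ord_le (selems X).
Proof. by apply: sort_sorted => a b; apply: leq_total. Qed.

Lemma selems_uniq X : uniq (selems X).
Proof. by rewrite sort_uniq enum_uniq. Qed.

Lemma mem_selems X x : (x \in selems X) = (x \in X).
Proof. by rewrite mem_sort mem_enum. Qed.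

Lemma size_selems X : size (selems X) = #|X|.
Proof. by rewrite size_sort cardE. Qed.

Lemma selems_Xdel X i : selems (Xdel X i) = del_at i (selems X).
Proof.
have ord_le_tr : transitive ord_le by move=> a b c; apply: leq_trans.
have ord_le_anti : antisymmetric ord_le.
  by move=> a b le_ab_ba; apply/val_inj/anti_leq.
rewrite -filter_index_neq ?selems_uniq //.
apply: (sorted_eq ord_le_tr ord_le_anti (selems_sorted _)).
  exact/sorted_filter/selems_sorted.
apply: uniq_perm; rewrite ?filter_uniq ?selems_uniq // => x.
by rewrite mem_selems mem_filter inE mem_selems andbC.
Qed.

Lemma Xdel_in_Inv X i : i < #|X| ->
  (Xdel X i \in Inv #|X|.-1 w) = sorted (inv_gt w) (del_at i (selems X)).
Proof.
move=> lt_i; rewrite inE selems_Xdel -size_selems selems_Xdel.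
by rewrite size_del_at ?size_selems // eqxx.
Qed.

Definition Inv_del_indices X :=
  [seq i <- iota 0 #|X| | sorted (inv_gt w) (del_at i (selems X))].

Lemma Inv_del_indices_sorted X : sorted ltn (Inv_del_indices X).
Proof. exact/sorted_filter/iota_ltn_sorted/ltn_trans. Qed.

Lemma mem_packet_Inv X Y :
  (Y \in packet X :&: Inv #|X|.-1 w) = (Y \in map (Xdel X) (Inv_del_indices X)).
Proof.
rewrite inE; apply/andP/mapP => [[/imsetP[i _ ->]] | [i]].
  rewrite Xdel_in_Inv // => sorted_i.
  by exists (nat_of_ord i); rewrite // mem_filter sorted_i mem_iota /=.
rewrite mem_filter mem_iota /= => /andP[sorted_i lt_i] ->.
by split; [apply/imsetP; exists (Ordinal lt_i) | rewrite Xdel_in_Inv].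
Qed.

Lemma packet_sub_Inv X :
  sorted (inv_gt w) (selems X) -> packet X \subset Inv #|X|.-1 w.
Proof.
move=> sorted_X; apply/subsetP => _ /imsetP[i _ ->].
rewrite Xdel_in_Inv //; apply: sorted_del_at sorted_X.
by move=> a b c /= lt_ba lt_cb; apply: ltn_trans lt_cb lt_ba.
Qed.

Lemma Inv_del_indices_close X : ~~ sorted (inv_gt w) (selems X) ->
  {in Inv_del_indices X &, forall i j, j <= i.+1}.
Proof.
move=> unsorted_X i j; rewrite !mem_filter !mem_iota /=.
move=> /andP[sorted_i _] /andP[sorted_j lt_j]; rewrite leqNgt; apply/negP => lt_ij.
case: (selems X) (size_selems X) lt_j sorted_i sorted_j unsorted_X => [<- //|x0 s].
by move=> <- lt_j sorted_i sorted_j; rewrite (sorted_of_sorted_del_at2 x0 lt_ij).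
Qed.

End Packets.

Theorem lemma3p2 (n k : nat) (w : 'S_n) (X : {set 'I_n}) :
  (0 < n)%N -> (1 <= k <= n)%N -> #|X| = k.+1 ->
  let S := packet X :&: Inv k w in
  S = set0 \/
  (exists i : nat, (i < k.+1)%N /\ S = [set Xdel X i]) \/
  (exists i : nat, (i < k)%N /\ S = [set Xdel X i; Xdel X i.+1]) \/
  S = packet X.
Proof.
move=> _ _ card_X; have -> : Inv k w = Inv #|X|.-1 w by rewrite card_X.
have [sorted_X | unsorted_X] := boolP (sorted (inv_gt w) (selems X)).
  by do 3 right; apply/setIidPl/packet_sub_Inv.
have in_indices a : a \in Inv_del_indices w X -> a < #|X|.
  by rewrite mem_filter mem_iota => /andP[].
have := sorted_ltn_close (Inv_del_indices_sorted w X)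
  (Inv_del_indices_close unsorted_X).
case=> [no_index | [a one_index] | [a two_indices]].
- by left; apply/setP => Y; rewrite mem_packet_Inv no_index inE.
- right; left; exists a; split; first by rewrite -card_X in_indices ?one_index ?inE.
  by apply/setP => Y; rewrite mem_packet_Inv one_index !inE.
- do 2 right; left; exists a; split.
    by rewrite -ltnS -card_X in_indices ?two_indices // !inE eqxx orbT.
  by apply/setP => Y; rewrite mem_packet_Inv two_indices !inE.
Qed.
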